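(* Let the notation be as in the context, and for $\hat u\in U(\mathfrak g)$, $P\in\hat S(\mathfrak g^* )$ put $\langle\hat u,P\rangle_\phi:=\epsilon_S(P\triangleleft\hat u)$. For multiindices $I,J,K$: (iii) if $|I|<|J|$, then every monomial occurring in $\partial^J\triangleleft\hat x_I$ has degree at least $|J|-|I|$; (iv) if $|I|=|J|$, then $\partial^J\triangleleft\hat x_I-I!\,\delta^I_J$ has zero constant term; (v) $\langle\hat x_J,\partial^K\rangle_\phi=K!\,\delta^K_J$ whenever $K\ge J$ in the componentwise partial order; (vi) there is a unique family $\{\partial^{\{K\}}\}_{K\in\mathbb N_0^n}$ of elements of $\hat S(\mathfrak g^* )$ such that $\langle\hat x_J,\partial^{\{K\}}\rangle_\phi=K!\,\delta^K_J$ for all multiindices $K,J$.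
   Context: Let $k$ be a field of characteristic zero and $\mathfrak g$ a Lie algebra over $k$ of finite dimension $n$ with basis $\hat x_1,\dots,\hat x_n$ and $[\hat x_\mu,\hat x_\nu]=C^\lambda_{\mu\nu}\hat x_\lambda$; summation over repeated indices is understood. $U(\mathfrak g)$ is its universal enveloping algebra (a cocommutative Hopf algebra with $\hat x_\mu$ primitive, counit $\epsilon$, Sweedler notation $\Delta(u)=\sum u_{(1)}\otimes u_{(2)}$). $\hat S(\mathfrak g^* ):=k[[\partial^1,\dots,\partial^n]]$, and $\epsilon_S:\hat S(\mathfrak g^* )\to k$ is the constant-term map. Let $\mathcal C^\alpha_\beta:=C^\alpha_{\beta\gamma}\partial^\gamma$ and $\phi:=\frac{-\mathcal C}{e^{-\mathcal C}-1}=\sum_{N\ge0}\frac{(-1)^NB_N}{N!}\mathcal C^N$ ($B_N$ Bernoulli numbers), a matrix with entries in $\hat S(\mathfrak g^* )$. It is known (and assumed) that there is a unique right Hopf action $\triangleleft$ of $U(\mathfrak g)$ on $\hat S(\mathfrak g^* )$ (i.e. $(a\triangleleft u)\triangleleft v=a\triangleleft(uv)$, $(ab)\triangleleft u=\sum(a\triangleleft u_{(1)})(b\triangleleft u_{(2)})$, $1\triangleleft u=\epsilon(u)1$) such that $a\mapsto a\triangleleft\hat x_\alpha$ is the continuous derivation sending $\partial^\beta\mapsto\phi^\beta_\alpha$. For a multiindex $K=(k_1,\dots,k_n)\in\mathbb N_0^n$: $|K|=k_1+\dots+k_n$, $K!=k_1!\cdots k_n!$, $\hat x_K:=\hat x_1^{k_1}\cdots\hat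 x_n^{k_n}\in U(\mathfrak g)$, $\partial^K:=(\partial^1)^{k_1}\cdots(\partial^n)^{k_n}$, and $\delta^K_J$ is $1$ if $K=J$ and $0$ otherwise. *)

From HB Require Import structures.
From mathcomp Require Import all_boot all_order all_algebra.
Set Implicit Arguments. Unset Strict Implicit. Unset Printing Implicit Defensive.
Import Order.TTheory GRing.Theory Num.Theory.
Local Open Scope ring_scope.

Definition mi (n : nat) := {ffun 'I_n -> nat}.
Definition mi0 {n : nat} : mi n := [ffun => 0%N].
Definition mdeg {n : nat} (K : mi n) : nat := (\sum_(i < n) K i)%N.
Definition mfact {n : nat} (K : mi n) : nat := (\prod_(i < n) (K i)`!)%N.
Definition mle {n : nat} (J K : mi n) : bool := [forall i, J i <= K i]%N.
Definition munit {n : nat} (b : 'I_n) : mi n := [ffun i => (i == b : nat)].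
Definition madd {n : nat} (A B : mi n) : mi n := [ffun i => A i + B i]%N.

Section PS.
Variables (k : fieldType) (n : nat).

(* \hat S(g^* ) = k[[d^1,...,d^n]]: a formal power series is its coefficient
   function on multiindices (coefficient of the monomial d^M). *)
Definition ps := mi n -> k.

Definition ps_add (P Q : ps) : ps := fun M => P M + Q M.
Definition ps_zero : ps := fun _ => 0.
Definition ps_scale (c : k) (P : ps) : ps := fun M => c * P M.
Definition ps_mon (K : mi n) : ps := fun M => (M == K)%:R.
Definition epsS (P : ps) : k := P mi0.

(* Cauchy product: (PQ)_M = sum_{A <= M} P_A Q_{M-A}.  The multiindices
   A <= M are enumerated as ffuns into 'I_(|M|+1). *)
Definition ps_mul (P Q : ps) : ps := fun M =>
  \sum_(A : {ffun 'I_n -> 'I_(mdeg M).+1} | [forall i, (A i <= M i)%N])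
     P [ffun i => (A i : nat)] * Q [ffun i => (M i - A i)%N].

Definition ps_pd (b : 'I_n) (P : ps) : ps := fun M =>
  (M b).+1%:R * P (madd M (munit b)).

(* square matrices with entries in \hat S(g^* ): A a b = entry (row a, col b) *)
Definition psmx := 'I_n -> 'I_n -> ps.
Definition psmx_mul (A B : psmx) : psmx := fun a b =>
  fun M => \sum_(c < n) ps_mul (A a c) (B c b) M.
Definition psmx_one : psmx := fun a b => if a == b then ps_mon mi0 else ps_zero.
Definition psmx_exp (A : psmx) (N : nat) : psmx := iter N (psmx_mul A) psmx_one.

End PS.
Arguments ps_add {k n}. Arguments ps_zero {k n}. Arguments ps_scale {k n}.
Arguments ps_mon {k n}. Arguments epsS {k n}. Arguments ps_mul {k n}.
Arguments ps_pd {k n}. Arguments psmx_mul {k n}. Arguments psmx_one {k n}.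
Arguments psmx_exp {k n}.

(* Bernoulli numbers, B_0 = 1, sum_{k=0}^{m} C(m+1,k) B_k = 0 (m >= 1),
   so that x/(e^x - 1) = sum_N B_N x^N / N!  (B_1 = -1/2). *)
Fixpoint bern_list (m : nat) : seq rat :=
  match m with
  | 0 => [:: 1]
  | m'.+1 => let s := bern_list m' in
      rcons s (- (\sum_(j < m'.+1) ('C(m'.+2, j))%:R * nth 0 s j) / (m'.+2)%:R)
  end.
Definition bernoulli (m : nat) : rat := last 0 (bern_list m).

Section Lie.
Variables (k : fieldType) (n : nat).
(* structure constants: Cst l m nu = C^l_{m nu}, [x_m, x_nu] = C^l_{m nu} x_l *)
Variable Cst : 'I_n -> 'I_n -> 'I_n -> k.

Definition lie_structure_constants : Prop :=
  (forall l m nu, Cst l m nu = - Cst l nu m) /\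
  (forall r m nu s,
     \sum_(l < n) (Cst l m nu * Cst r l s + Cst l nu s * Cst r l m
                   + Cst l s m * Cst r l nu) = 0).

Definition calC : psmx k n := fun a b =>
  fun M => \sum_(c < n) Cst a b c * ps_mon (munit c) M.

(* phi = -C/(e^{-C}-1) = sum_N (-1)^N B_N / N! C^N.  The coefficient of d^M of
   the N-th summand vanishes for N > |M| (C^N is homogeneous of degree N), so
   the coefficientwise sum is finite. *)
Definition phi : psmx k n := fun a b => fun M =>
  \sum_(N < (mdeg M).+1)
     ((-1) ^+ N * ratr (bernoulli N) / (N`!)%:R) * psmx_exp calC N a b M.

(* D_alpha := (_ <| x_alpha): the continuous derivation of k[[d]] with
   d^beta |-> phi^beta_alpha, i.e. D_alpha P = sum_beta phi^beta_alpha * dP/dd^beta. *)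
Definition Dx (alpha : 'I_n) (P : ps k n) : ps k n := fun M =>
  \sum_(beta < n) ps_mul (phi beta alpha) (ps_pd beta P) M.

(* P <| x_I for x_I = x_1^{i_1} ... x_n^{i_n}: by the right action property
   (P <| u) <| v = P <| (u v), first apply D_1 i_1 times, then D_2 i_2 times, ... *)
Definition act_mon (P : ps k n) (I : mi n) : ps k n :=
  foldl (fun Q i => iter (I i) (Dx i) Q) P (enum 'I_n).

Definition pairing (I : mi n) (P : ps k n) : k := epsS (act_mon P I).
End Lie.
Arguments calC {k n}. Arguments phi {k n}. Arguments Dx {k n}.
Arguments act_mon {k n}. Arguments pairing {k n}.

From HB Require Import structures.
From mathcomp Require Import all_boot all_order all_algebra zify.
From Stdlib Require Import FunctionalExtensionality.
Import Order.TTheory GRing.Theory Num.Theory.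
Local Open Scope ring_scope.
Set Implicit Arguments. Unset Strict Implicit.

(* Since phi = 1 + (terms of positive degree), the derivation
   D_a = (_ <| x_a) lowers the order of a power series by at most one and acts
   on its lowest-degree homogeneous part as the partial derivative d/dd^a.
   Iterating, d^J <| x_I has order >= |J| - |I|, and if P has order >= |J| then
   <x_J, P> = J! P_J, whereas <x_J, P> = 0 when P has order > |J|.  This gives
   (iii)-(v); for (vi) the pairing is triangular with respect to the degree
   with invertible diagonal entries J! (characteristic zero), so the dual
   family is solved for degree by degree and is unique. *)

Lemma mdeg_enum n (I : mi n) : mdeg I = (\sum_(i <- enum 'I_n) I i)%N.
Proof. by rewrite /mdeg big_enum. Qed.

Lemma mdeg_mi0 n : mdeg (@mi0 n) = 0%N.
Proof. by rewrite /mdeg big1 // => i _; rewrite ffunE. Qed.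

Lemma mdeg_madd_munit n (M : mi n) b : mdeg (madd M (munit b)) = (mdeg M).+1.
Proof.
rewrite /mdeg (eq_bigr (fun i => M i + (i == b))%N); last by move=> i _; rewrite !ffunE.
rewrite big_split /= -addn1; congr (_ + _)%N.
by rewrite (bigD1 b) //= eqxx big1 ?addn0 // => i /negPf ->.
Qed.

Lemma mdeg_ltn n (J K : mi n) :
  (forall i, J i <= K i)%N -> (exists i, J i < K i)%N -> (mdeg J < mdeg K)%N.
Proof.
move=> JleK [i Ji]; rewrite /mdeg (bigD1 i) //= [X in (_ < X)%N](bigD1 i) //=.
by rewrite -addSn leq_add // leq_sum.
Qed.

Lemma mle_mdeg_ltn n (J K : mi n) : mle J K -> J != K -> (mdeg J < mdeg K)%N.
Proof.
move=> /forallP JleK JneK; apply: mdeg_ltn => //.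
apply/existsP; apply: contraR JneK => /existsPn JgeK.
by apply/eqP/ffunP => i; apply/eqP; rewrite eqn_leq JleK leqNgt JgeK.
Qed.

Section PowerSeries.
Variables (k : fieldType) (n : nat).
Implicit Types (P Q R : ps k n) (I J K M : mi n).

Definition order_ge P (d : nat) := forall M, (mdeg M < d)%N -> P M = 0.

Lemma order_ge_leq P d e : order_ge P d -> (e <= d)%N -> order_ge P e.
Proof. by move=> HP ed M Me; apply: HP; apply: leq_trans ed. Qed.

Lemma order_ge_mon K : order_ge (ps_mon K) (mdeg K).
Proof. by move=> M MK; rewrite /ps_mon; case: eqP MK => // ->; rewrite ltnn. Qed.

Lemma order_ge_pd b P d : order_ge P d.+1 -> order_ge (ps_pd b P) d.
Proof. by move=> HP M Md; rewrite /ps_pd HP ?mulr0 // mdeg_madd_munit. Qed.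

Lemma ps_mul_low R Q d M :
  order_ge Q d -> (mdeg M <= d)%N -> ps_mul R Q M = R mi0 * Q M.
Proof.
move=> HQ Md; set A0 := [ffun _ : 'I_n => @ord0 (mdeg M)].
rewrite /ps_mul (bigD1 A0) /=; last by apply/forallP => i; rewrite ffunE.
have -> : [ffun i => (A0 i : nat)] = mi0 by apply/ffunP => i; rewrite !ffunE.
have -> : [ffun i => M i - A0 i]%N = M by apply/ffunP => i; rewrite !ffunE subn0.
rewrite big1 ?addr0 // => A /andP [/forallP AleM AneA0].
have /existsP [i Ai] : [exists i, 0 < A i]%N.
  apply: contraR AneA0 => /existsPn A_0; apply/eqP/ffunP => i.
  by apply/val_inj; rewrite ffunE /=; apply/eqP; rewrite -leqn0 leqNgt A_0.
rewrite HQ ?mulr0 //; apply: leq_trans Md; apply: mdeg_ltn => [j|].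
  by rewrite ffunE leq_subr.
by exists i; rewrite ffunE; have := AleM i; lia.
Qed.

Definition ps_sub P Q : ps k n := fun M => P M - Q M.

(* Generalizes [act_mon Cst P I], which is [act_seq (Dx Cst) P I (enum 'I_n)]. *)
Definition act_seq (D : 'I_n -> ps k n -> ps k n) P I (s : seq 'I_n) :=
  foldl (fun Q i => iter (I i) (D i) Q) P s.

Lemma ps_pd_iterE m a P M : ((M a)`!)%:R * iter m (ps_pd a) P M =
  ((M a + m)`!)%:R * P [ffun i => if i == a then M i + m else M i]%N.
Proof.
elim: m M => [|m IH] M /=.
  by rewrite addn0; congr (_ * P _); apply/ffunP => i; rewrite ffunE; case: eqP => // ->; rewrite addn0.
have Ma : madd M (munit a) a = (M a).+1 by rewrite !ffunE eqxx addn1.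
rewrite /ps_pd mulrA -natrM mulnC -factS -Ma IH Ma addSnnS; congr (_ * P _).
by apply/ffunP => i; rewrite !ffunE; case: eqP => [->|_]; rewrite ?eqxx ?addn0 // addn1 addSnnS.
Qed.

Lemma act_seq_pdE s I P M : uniq s ->
  ((\prod_(i <- s) (M i)`!)%N)%:R * act_seq ps_pd P I s M =
  ((\prod_(i <- s) (M i + I i)`!)%N)%:R * P [ffun i => if i \in s then M i + I i else M i]%N.
Proof.
elim: s P M => [|a s IH] P M.
  by move=> _; rewrite !big_nil !mul1r; congr (P _); apply/ffunP => i; rewrite ffunE.
rewrite /act_seq /= -/(act_seq _ _ I s).
case/andP => a_notin_s s_uniq; rewrite !big_cons !natrM -mulrA IH // mulrCA.
set M' := [ffun i => if i \in s then M i + I i else M i]%N.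
have M'a : M' a = M a by rewrite ffunE (negPf a_notin_s).
rewrite -M'a ps_pd_iterE M'a mulrCA -mulrA; congr (_ * (_ * P _)).
apply/ffunP => i; rewrite !ffunE in_cons.
by case: (eqVneq i a) => [->|] /=; rewrite ?(negPf a_notin_s).
Qed.

Lemma epsS_act_pd I P : epsS (act_seq ps_pd P I (enum 'I_n)) = (mfact I)%:R * P I.
Proof.
have := act_seq_pdE I P mi0 (enum_uniq 'I_n).
rewrite /epsS big1 ?mul1r => [->|i _]; last by rewrite ffunE.
rewrite /mfact -big_enum /=; congr (_%:R * P _).
  by apply: eq_bigr => i _; rewrite ffunE.
by apply/ffunP => i; rewrite !ffunE mem_enum.
Qed.

Lemma natr_mfact_neq0 (hk : [pchar k] =i pred0) I : (mfact I)%:R != 0 :> k.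
Proof.
have /pcharf0P -> : has_pchar0 k by [].
by rewrite -lt0n prodn_gt0 // => i; rewrite fact_gt0.
Qed.

End PowerSeries.
Arguments order_ge_mon {k n} K.

Section Action.
Variables (k : fieldType) (n : nat) (Cst : 'I_n -> 'I_n -> 'I_n -> k).
Implicit Types (P Q : ps k n) (I J K M : mi n).

Lemma phi_mi0 b a : phi Cst b a mi0 = (b == a)%:R.
Proof.
rewrite /phi mdeg_mi0 big_ord1 (_ : bernoulli 0 = 1%:R) // ratr_nat expr0 fact0.
rewrite divr1 !mul1r /psmx_exp /= /psmx_one; case: (b == a) => //; by rewrite /ps_mon eqxx.
Qed.

Lemma Dx_low a P d M :
  order_ge P d.+1 -> (mdeg M <= d)%N -> Dx Cst a P M = ps_pd a P M.
Proof.
move=> HP Md; rewrite /Dx (eq_bigr (fun b => (b == a)%:R * ps_pd b P M)).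
  by rewrite (bigD1 a) //= eqxx mul1r big1 ?addr0 // => b /negPf ->; rewrite mul0r.
by move=> b _; rewrite (ps_mul_low _ (order_ge_pd b HP) Md) phi_mi0.
Qed.

Lemma Dx_order a P d : order_ge P d -> order_ge (Dx Cst a P) d.-1.
Proof.
case: d => [//|d] HP M Md.
by rewrite (Dx_low a HP (ltnW Md)) (order_ge_pd a HP).
Qed.

Lemma act_seq_Dx_order I s P d :
  order_ge P d -> order_ge (act_seq (Dx Cst) P I s) (d - \sum_(i <- s) I i).
Proof.
elim: s d P => [|a s IH] d P HP /=; first by rewrite big_nil subn0.
rewrite big_cons subnDA; apply: IH.
elim: (I a) => [|m IHm] /=; first by rewrite subn0.
by rewrite subnS; apply: Dx_order.
Qed.

Definition eq_initial (d : nat) P Q :=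
  [/\ order_ge P d, order_ge Q d & forall M, mdeg M = d -> P M = Q M].

Lemma eq_initial_Dx d a P Q :
  eq_initial d.+1 P Q -> eq_initial d (Dx Cst a P) (ps_pd a Q).
Proof.
case=> HP HQ PQ; split; [exact: Dx_order HP | exact: order_ge_pd |].
by move=> M Md; rewrite (Dx_low a HP (eq_leq Md)) /ps_pd PQ // mdeg_madd_munit Md.
Qed.

Lemma eq_initial_act_seq I s d P Q : eq_initial (\sum_(i <- s) I i + d) P Q ->
  eq_initial d (act_seq (Dx Cst) P I s) (act_seq ps_pd Q I s).
Proof.
elim: s P Q => [|a s IH] P Q /=; first by rewrite big_nil.
rewrite big_cons -addnA => PQ; apply: IH.
elim: (I a) (\sum_(j <- s) I j + d)%N PQ => [|m IHm] e PQ /=; first by rewrite add0n in PQ.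
apply: eq_initial_Dx; apply: IHm; by rewrite -addSnnS.
Qed.

Lemma act_mon_sub J P Q :
  act_mon Cst (ps_sub P Q) J = ps_sub (act_mon Cst P J) (act_mon Cst Q J).
Proof.
have Dx_sub a P' Q' : Dx Cst a (ps_sub P' Q') = ps_sub (Dx Cst a P') (Dx Cst a Q').
  apply: functional_extensionality => M; rewrite /Dx /ps_sub -sumrB.
  apply: eq_bigr => b _; rewrite /ps_mul -sumrB.
  by apply: eq_bigr => A _; rewrite /ps_pd /ps_sub !mulrBr.
rewrite /act_mon; elim: (enum 'I_n) P Q => [|a s IH] P Q //=.
by rewrite -IH; congr foldl; elim: (J a) => [|m IHm] //=; rewrite IHm Dx_sub.
Qed.

Lemma pairing_sub J P Q : pairing Cst J (ps_sub P Q) = pairing Cst J P - pairing Cst J Q.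
Proof. by rewrite /pairing act_mon_sub. Qed.

Lemma pairing_initial J P : order_ge P (mdeg J) -> pairing Cst J P = (mfact J)%:R * P J.
Proof.
move=> HP; have PP : eq_initial (\sum_(i <- enum 'I_n) J i + 0) P P.
  by rewrite addn0 -mdeg_enum.
have [_ _ initE] := eq_initial_act_seq PP.
rewrite /pairing /epsS /act_mon -/(act_seq (Dx Cst) P J _) initE ?mdeg_mi0 //.
exact: epsS_act_pd.
Qed.

Lemma pairing_order_gt J P : order_ge P (mdeg J).+1 -> pairing Cst J P = 0.
Proof.
move=> /(act_seq_Dx_order (I := J) (s := enum 'I_n)); rewrite -mdeg_enum subSnn => HP.
by apply: HP; rewrite mdeg_mi0.
Qed.

Section Dual.
Hypothesis hk : [pchar k] =i pred0.

(* [dual_trunc K d] is the part of degree < d of the dual element d^{K}; its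
   degree-d part is then forced by pairing_initial. *)
Fixpoint dual_trunc K (d : nat) : ps k n :=
  match d with
  | 0 => ps_zero
  | d'.+1 => fun M => if (mdeg M < d')%N then dual_trunc K d' M
      else if mdeg M == d' then
        ((mfact K)%:R * (K == M)%:R - pairing Cst M (dual_trunc K d')) / (mfact M)%:R
      else 0
  end.

Definition dual_mon K : ps k n := fun M => dual_trunc K (mdeg M).+1 M.

Lemma dual_trunc_high K d M : (d <= mdeg M)%N -> dual_trunc K d M = 0.
Proof. by elim: d => [|d IH] //= dM; rewrite ltnNge (ltnW dM) /=; case: eqP dM => // ->; rewrite ltnn. Qed.

Lemma dual_trunc_stable K d M : (mdeg M < d)%N -> dual_trunc K d M = dual_mon K M.
Proof.
elim: d => [|d IH] // Md; have [lt|ge] := ltnP (mdeg M) d; first by rewrite /= lt IH.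
by have -> : d = mdeg M by lia.
Qed.

Lemma pairing_dual_trunc K J :
  pairing Cst J (dual_trunc K (mdeg J).+1) = (mfact K)%:R * (K == J)%:R.
Proof.
set d := mdeg J.
have top : order_ge (ps_sub (dual_trunc K d.+1) (dual_trunc K d)) d.
  by move=> M Md; rewrite /ps_sub /= Md subrr.
move: (pairing_initial top); rewrite pairing_sub /ps_sub (dual_trunc_high K (leqnn d)).
rewrite subr0 /= ltnn eqxx mulrC divfK ?natr_mfact_neq0 //.
by move/eqP; rewrite subr_eq subrK => /eqP.
Qed.

Lemma pairing_dual_mon K J : pairing Cst J (dual_mon K) = (mfact K)%:R * (K == J)%:R.
Proof.
have tail : order_ge (ps_sub (dual_mon K) (dual_trunc K (mdeg J).+1)) (mdeg J).+1.
  by move=> M MJ; rewrite /ps_sub dual_trunc_stable ?subrr.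
move: (pairing_order_gt tail); rewrite pairing_sub pairing_dual_trunc.
by move/eqP; rewrite subr_eq0 => /eqP.
Qed.

Lemma pairing_eq0 P : (forall J, pairing Cst J P = 0) -> P = ps_zero.
Proof.
move=> P_0; suff PO d : order_ge P d.
  by apply: functional_extensionality => M; apply: (PO (mdeg M).+1).
elim: d => [//|d IH] M; rewrite ltnS leq_eqVlt => /orP [/eqP Md|]; last exact: IH.
move: (P_0 M); rewrite pairing_initial ?Md // => /eqP.
by rewrite mulf_eq0 (negPf (natr_mfact_neq0 hk M)) => /eqP.
Qed.

End Dual.
End Action.

Theorem lemma1 (k : fieldType) (hk : [pchar k] =i pred0) (n : nat)
  (Cst : 'I_n -> 'I_n -> 'I_n -> k)
  (hLie : lie_structure_constants Cst) :
  (* (iii) *)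
  (forall I J : mi n, (mdeg I < mdeg J)%N ->
     forall M : mi n, act_mon Cst (ps_mon J) I M != 0 ->
       (mdeg J - mdeg I <= mdeg M)%N) /\
  (* (iv) *)
  (forall I J : mi n, mdeg I = mdeg J ->
     epsS (ps_add (act_mon Cst (ps_mon J) I)
                  (ps_scale (- ((mfact I)%:R * (I == J)%:R)) (ps_mon mi0))) = 0) /\
  (* (v) *)
  (forall J K : mi n, mle J K ->
     pairing Cst J (ps_mon K) = (mfact K)%:R * (K == J)%:R) /\
  (* (vi) *)
  (exists! F : mi n -> ps k n,
     forall K J : mi n, pairing Cst J (F K) = (mfact K)%:R * (K == J)%:R).
Proof.
split.
  move=> I J _ M; rewrite leqNgt; apply: contra => MJI.
  have := act_seq_Dx_order Cst (I := I) (s := enum 'I_n) (order_ge_mon J).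
  by rewrite -mdeg_enum => /(_ M MJI)/eqP.
split.
  move=> I J IJ; have JI : order_ge (@ps_mon k n J) (mdeg I) by rewrite IJ; exact: order_ge_mon.
  have := pairing_initial Cst JI; rewrite /pairing /epsS /ps_add /ps_scale => ->.
  rewrite /ps_mon !eqxx mulr1.
  by rewrite [I == J]eq_sym subrr.
split.
  move=> J K JK; have [->|KJ] := eqVneq K J.
    by rewrite pairing_initial ?/ps_mon ?eqxx //; apply: order_ge_mon.
  rewrite mulr0; apply: pairing_order_gt; apply: order_ge_leq (order_ge_mon K) _.
  by apply: mle_mdeg_ltn; rewrite // eq_sym.
exists (@dual_mon k n Cst); split; first by move=> K J; apply: pairing_dual_mon.
move=> G HG; apply: functional_extensionality => K.
have /(pairing_eq0 hk) DG : forall J, pairing Cst J (ps_sub (dual_mon Cst K) (G K)) = 0.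
  by move=> J; rewrite pairing_sub pairing_dual_mon // HG subrr.
apply: functional_extensionality => M.
by apply/eqP; rewrite -subr_eq0; apply/eqP; move: DG => /(congr1 (fun P => P M)).
Qed.
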